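(* Let $n\ge3$. There exist vectors $a_1,\dots,a_n\in H_0$ with $a_1+\dots+a_n=0$ and $\mathrm{Span}\{a_i\}=H_0$ such that the polar dual (inside $H_0$) of $Root_n^a:=\mathrm{Conv}\{a_i-a_j:1\le i\ne j\le n\}$ is the polytope $$\Delta_{\mathcal F}=\sum_{i=1}^n[\hat e_i,\hat e_{i+1}]=\sum_{i=1}^n[0,\hat e_{i+1}-\hat e_i]\subset H_0,$$ where $\hat e_{n+1}:=\hat e_1$.
   Context: $H_0=\{x\in\mathbb{R}^n:\sum x_i=0\}$, $\hat e_i=e_i-\frac1n(e_1+\dots+e_n)$. Polar dual inside $H_0$: $K^\circ=\{y\in H_0:\langle y,x\rangle\le1\ \forall x\in K\}$. The polytope $\Delta_{\mathcal F}$ is the translate into $H_0$ of the Minkowski sum $\sum_{i=1}^n[e_i,e_{i+1}]$ associated to the hypergraph $\mathcal F=\{\{1,2\},\dots,\{n-1,n\},\{n,1\}\}$. *)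

From HB Require Import structures.
From mathcomp Require Import all_boot all_order all_algebra.
Set Implicit Arguments. Unset Strict Implicit. Unset Printing Implicit Defensive.
Import Order.TTheory GRing.Theory Num.Theory.
Local Open Scope ring_scope.

Section Defs.
Variables (R : realFieldType) (n : nat).

Definition dotv (x y : 'rV[R]_n) : R := \sum_(k < n) x 0 k * y 0 k.

Definition inH0 (x : 'rV[R]_n) : Prop := \sum_(k < n) x 0 k = 0.

Definition evec (i : 'I_n) : 'rV[R]_n := delta_mx 0 i.
Definition ehat (i : 'I_n) : 'rV[R]_n :=
  evec i - (n%:R)^-1 *: \sum_(j < n) evec j.

Definition in_span (a : 'I_n -> 'rV[R]_n) (x : 'rV[R]_n) : Prop :=
  exists c : 'I_n -> R, x = \sum_(i < n) c i *: a i.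

Definition in_conv (I : finType) (P : pred I) (p : I -> 'rV[R]_n) (x : 'rV[R]_n) : Prop :=
  exists l : I -> R, (forall k, P k -> 0 <= l k) /\ \sum_(k | P k) l k = 1 /\
    x = \sum_(k | P k) l k *: p k.

Definition polar_H0 (K : 'rV[R]_n -> Prop) (y : 'rV[R]_n) : Prop :=
  inH0 y /\ forall x, K x -> dotv y x <= 1.

Definition in_mink_seg (u v : 'I_n -> 'rV[R]_n) (y : 'rV[R]_n) : Prop :=
  exists t : 'I_n -> R, (forall i, 0 <= t i <= 1) /\
    y = \sum_(i < n) ((1 - t i) *: u i + t i *: v i).

Definition in_Root (a : 'I_n -> 'rV[R]_n) : 'rV[R]_n -> Prop :=
  in_conv (fun ij : 'I_n * 'I_n => ij.1 != ij.2) (fun ij => a ij.1 - a ij.2).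

End Defs.

(* Take a_i := ê_1 + ... + ê_i, centred so that the a_i sum to zero.  For y in
   H_0 the pairing <y, a_i - a_j> is S_i - S_j, where S_i := y_1 + ... + y_i, so
   y lies in the polar of Root_n^a iff all differences S_i - S_j are at most 1,
   i.e. iff S_i = M - t_i for some t valued in [0, 1] (take M := max S).  On the
   other side, sum_i ((1 - t_i) ê_i + t_i ê_{i+1}) is the vector with coordinates
   t_{k-1} - t_k (indices mod n), whose partial sums are t_n - t_i. *)

From HB Require Import structures.
From mathcomp Require Import all_boot all_order all_algebra.
From mathcomp Require Import zify ring lra.
Set Implicit Arguments. Unset Strict Implicit. Unset Printing Implicit Defensive.
Import Order.TTheory GRing.Theory Num.Theory.
Local Open Scope ring_scope.

Lemma ord_pred_val0 n (i : 'I_n) : val i = 0%N -> val (ord_pred i) = n.-1.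
Proof. by move=> /= ->; rewrite add0n modn_small // prednK // (leq_ltn_trans _ (ltn_ord i)). Qed.

Lemma ord_pred_valS n (i : 'I_n) m : val i = m.+1 -> val (ord_pred i) = m.
Proof.
move=> /= i_eq; have lt_mn : (m.+1 < n)%N by rewrite -i_eq ltn_ord.
by rewrite i_eq addSn /= modnDr modn_small // ltnW.
Qed.

Section CyclicPartialSums.
Variables (V : zmodType) (n : nat).
Implicit Types (F t : 'I_n -> V) (i k : 'I_n).

Definition psum F i : V := \sum_(j < n | (j <= i)%N) F j.

Lemma psum_val0 F i : val i = 0%N -> psum F i = F i.
Proof.
move=> i0; rewrite /psum (big_pred1 i) // => k /=.
by rewrite i0 leqn0 -(inj_eq val_inj) /= i0.
Qed.

Lemma psum_valS F i m : val i = m.+1 -> psum F i = psum F (ord_pred i) + F i.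
Proof.
move=> iS; rewrite /psum (bigD1 i) //= addrC; congr (_ + _); apply: eq_bigl => k.
by have /= -> := ord_pred_valS iS; rewrite -(inj_eq val_inj) /= iS; lia.
Qed.

Lemma psum_val_last F i : val i = n.-1 -> psum F i = \sum_j F j.
Proof. by move=> i_last; apply: eq_bigl => k; have := ltn_ord k; rewrite i_last; lia. Qed.

Lemma psum_ord_pred F k :
  psum F k - psum F (ord_pred k) = F k - (\sum_j F j) *+ (val k == 0%N).
Proof.
case k_eq: (val k) => [|m].
  by rewrite psum_val0 // psum_val_last ?(ord_pred_val0 k_eq).
by rewrite (psum_valS F k_eq) addrC addKr subr0.
Qed.

Lemma psum_cyclic_diff t i0 : val i0 = 0%N ->
  forall i, psum (fun k => t (ord_pred k) - t k) i = t (ord_pred i0) - t i.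
Proof.
move=> i0_eq i; move Hm: (val i) => m; elim: m i Hm => [|m IHm] i i_eq.
  by rewrite psum_val0 // (_ : i = i0) //; apply: val_inj; rewrite /= i_eq i0_eq.
by rewrite (psum_valS _ i_eq) (IHm _ (ord_pred_valS i_eq)) addrA subrK.
Qed.

End CyclicPartialSums.

Section HyperplaneH0.
Variables (R : realFieldType) (n : nat).
Hypothesis n_gt0 : (0 < n)%N.
Implicit Types (x y : 'rV[R]_n) (i j k : 'I_n) (t : 'I_n -> R).

Local Notation ehat := (@ehat R n).
Local Notation evec := (@evec R n).

Lemma dotvD y u v : dotv y (u + v) = dotv y u + dotv y v.
Proof. by rewrite /dotv -big_split; apply: eq_bigr => k _; rewrite !mxE mulrDr. Qed.

Lemma dotvZ y c u : dotv y (c *: u) = c * dotv y u.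
Proof. by rewrite /dotv mulr_sumr; apply: eq_bigr => k _; rewrite !mxE mulrCA. Qed.

Lemma dotvB y u v : dotv y (u - v) = dotv y u - dotv y v.
Proof. by rewrite dotvD -scaleN1r dotvZ mulN1r. Qed.

Lemma dotv_sum (I : finType) (P : pred I) (F : I -> 'rV[R]_n) y :
  dotv y (\sum_(a | P a) F a) = \sum_(a | P a) dotv y (F a).
Proof. by rewrite /dotv exchange_big; apply: eq_bigr => k _; rewrite summxE mulr_sumr. Qed.

Lemma dotv_evec y k : dotv y (evec k) = y 0 k.
Proof.
rewrite /dotv (bigD1 k) //= big1 => [|j /negbTE jk]; rewrite !mxE ?eqxx ?mulr1 ?addr0 //.
by rewrite jk mulr0.
Qed.

Lemma inH0D x y : inH0 x -> inH0 y -> inH0 (x + y).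
Proof. by rewrite /inH0 => x0 y0; under eq_bigr do rewrite mxE; rewrite big_split /= x0 y0 addr0. Qed.

Lemma inH0Z c x : inH0 x -> inH0 (c *: x).
Proof. by rewrite /inH0 => x0; under eq_bigr do rewrite mxE; rewrite -mulr_sumr x0 mulr0. Qed.

Lemma inH0_sum (I : finType) (P : pred I) (F : I -> 'rV[R]_n) :
  (forall a, P a -> inH0 (F a)) -> inH0 (\sum_(a | P a) F a).
Proof.
move=> F0; apply: big_ind => //; last exact: inH0D.
by rewrite /inH0 big1 // => k _; rewrite mxE.
Qed.

Lemma n_neq0 : n%:R != 0 :> R.
Proof. by rewrite pnatr_eq0 -lt0n. Qed.

Lemma ehatE i k : ehat i 0 k = (k == i)%:R - n%:R^-1.
Proof.
rewrite !mxE summxE (bigD1 k) //= big1 => [|j /negbTE jk]; rewrite !mxE ?eqxx.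
  by rewrite addr0 mulr1.
by rewrite eq_sym jk.
Qed.

Lemma inH0_ehat i : inH0 (ehat i).
Proof.
rewrite /inH0; under eq_bigr do rewrite ehatE.
rewrite sumrB (bigD1 i) //= eqxx big1 => [|k /negbTE -> //].
by rewrite addr0 sumr_const card_ord -[_ *+ n]mulr_natr mulVf ?n_neq0 ?subrr.
Qed.

Lemma sum_ehat : \sum_i ehat i = 0.
Proof. by rewrite sumrB sumr_const card_ord -scaler_nat scalerA mulfV ?n_neq0 // scale1r subrr. Qed.

Lemma ehatB i j : ehat i - ehat j = evec i - evec j.
Proof. by rewrite /ehat opprB addrA subrK. Qed.

Lemma dotv_ehat y k : inH0 y -> dotv y (ehat k) = y 0 k.
Proof.
move=> y0; rewrite dotvB dotvZ dotv_sum dotv_evec.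
by under eq_bigr do rewrite dotv_evec; rewrite y0 mulr0 subr0.
Qed.

Lemma inH0_ehat_expansion x : inH0 x -> x = \sum_k x 0 k *: ehat k.
Proof.
move=> x0; under eq_bigr do rewrite scalerBr.
by rewrite sumrB -scaler_suml x0 scale0r subr0 [LHS]row_sum_delta.
Qed.

Lemma in_conv_point (I : finType) (P : pred I) (p : I -> 'rV[R]_n) a :
  P a -> in_conv P p (p a).
Proof.
move=> Pa; exists (fun b => (b == a)%:R); split; first by move=> b _; rewrite ler0n.
split; rewrite (bigD1 a) //= eqxx big1 ?addr0 ?scale1r // => b /andP[_ /negbTE ->] //.
exact: scale0r.
Qed.

Lemma dotv_conv_le (I : finType) (P : pred I) (p : I -> 'rV[R]_n) c y x :
  (forall a, P a -> dotv y (p a) <= c) -> in_conv P p x -> dotv y x <= c.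
Proof.
move=> le_c [l [l_ge0 [l_sum1 ->]]]; rewrite dotv_sum -[c]mul1r -l_sum1 mulr_suml.
by apply: ler_sum => a Pa; rewrite dotvZ ler_wpM2l ?l_ge0 ?le_c.
Qed.

Lemma polar_H0_conv (I : finType) (P : pred I) (p : I -> 'rV[R]_n) y :
  polar_H0 (in_conv P p) y <-> inH0 y /\ forall a, P a -> dotv y (p a) <= 1.
Proof.
split=> -[y0 le1]; split=> //; first by move=> a Pa; apply/le1/in_conv_point.
by move=> x; apply: dotv_conv_le.
Qed.

Definition avec i : 'rV[R]_n := psum ehat i - n%:R^-1 *: \sum_j psum ehat j.

Lemma inH0_avec i : inH0 (avec i).
Proof.
have psum_H0 j : inH0 (psum ehat j) by apply: inH0_sum => k _; apply: inH0_ehat.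
by rewrite /avec -scaleNr; apply/inH0D/inH0Z/inH0_sum.
Qed.

Lemma sum_avec : \sum_i avec i = 0.
Proof. by rewrite sumrB sumr_const card_ord -scaler_nat scalerA mulfV ?n_neq0 // scale1r subrr. Qed.

Lemma dotv_avecB y i j :
  inH0 y -> dotv y (avec i - avec j) = psum (y 0) i - psum (y 0) j.
Proof.
move=> y0; rewrite /avec opprB addrA subrK dotvB !dotv_sum.
by congr (_ - _); apply: eq_bigr => k _; rewrite dotv_ehat.
Qed.

Lemma ehat_avecB k : ehat k = avec k - avec (ord_pred k).
Proof. by rewrite /avec opprB addrA subrK psum_ord_pred sum_ehat mul0rn subr0. Qed.

Lemma span_avec x : inH0 x <-> in_span avec x.
Proof.
split=> [x0|[c ->]]; last by apply: inH0_sum => i _; apply/inH0Z/inH0_avec.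
exists (fun k => x 0 k - x 0 (ordS k)); rewrite [LHS]inH0_ehat_expansion //.
under eq_bigr do rewrite ehat_avecB scalerBr.
under [RHS]eq_bigr do rewrite scalerBl.
rewrite !sumrB; congr (_ - _); rewrite (reindex_inj (@ordS_inj n)) /=.
by under eq_bigr do rewrite ordSK.
Qed.

Definition cyc_diff t : 'rV[R]_n := \row_k (t (ord_pred k) - t k).

Lemma inH0_cyc_diff t : inH0 (cyc_diff t).
Proof.
rewrite /inH0; under eq_bigr do rewrite mxE.
by rewrite sumrB (reindex_inj (@ordS_inj n)) /=; under eq_bigr do rewrite ordSK; rewrite subrr.
Qed.

Lemma sum_scale_ehatB t : \sum_i t i *: (ehat (ordS i) - ehat i) = cyc_diff t.
Proof.
under eq_bigr do rewrite ehatB scalerBr.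
rewrite [RHS]row_sum_delta; under [RHS]eq_bigr do rewrite mxE scalerBl.
rewrite !sumrB (reindex_inj (@ord_pred_inj n)) /=.
by under eq_bigr do rewrite ord_predK.
Qed.

Lemma mink_seg_ehat t :
  \sum_i ((1 - t i) *: ehat i + t i *: ehat (ordS i)) = cyc_diff t.
Proof.
rewrite -sum_scale_ehatB -[RHS]add0r -[X in X + _]sum_ehat -big_split.
apply: eq_bigr => i _ /=.
by rewrite scalerBl scale1r [in RHS]scalerBr addrA addrAC.
Qed.

Lemma mink_seg_zero_ehatB t :
  \sum_i ((1 - t i) *: 0 + t i *: (ehat (ordS i) - ehat i)) = cyc_diff t.
Proof. by under eq_bigr do rewrite scaler0 add0r; exact: sum_scale_ehatB. Qed.

Lemma polar_Root_avec y :
  polar_H0 (in_Root avec) y <->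
  inH0 y /\ forall i j, psum (y 0) i - psum (y 0) j <= 1.
Proof.
rewrite /in_Root polar_H0_conv; split=> -[y0 le1]; split=> //.
  move=> i j; have [<-|ij] := eqVneq i j; first by rewrite subrr ler01.
  by rewrite -dotv_avecB //; apply: (le1 (i, j)).
by move=> [i j] _ /=; rewrite dotv_avecB.
Qed.

Lemma psum_spread_le1 y : inH0 y ->
  (forall i j, psum (y 0) i - psum (y 0) j <= 1) <->
  exists2 t, (forall i, 0 <= t i <= 1) & y = cyc_diff t.
Proof.
pose i0 : 'I_n := Ordinal n_gt0; move=> y0; split=> [le1|[t t01 ->] i j].
  pose m := [arg max_(i > i0) psum (y 0) i]%O.
  exists (fun i => psum (y 0) m - psum (y 0) i).
    move=> i; rewrite le1 subr_ge0 andbT /m.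
    by case: arg_maxP => // j _; apply.
  apply/rowP => k; have := psum_ord_pred (y 0) k; rewrite y0 mul0rn subr0 mxE => <-; ring.
have psumE k : psum (cyc_diff t 0) k = t (ord_pred i0) - t k.
  by rewrite -(psum_cyclic_diff t (erefl : val i0 = 0%N)); apply: eq_bigr => l _; rewrite mxE.
have /andP[ti_ge0 _] := t01 i; have /andP[_ tj_le1] := t01 j.
rewrite !psumE; lra.
Qed.

End HyperplaneH0.

Theorem mainTheorem11 (R : realFieldType) (n : nat) (hn : (3 <= n)%N) :
  exists a : 'I_n -> 'rV[R]_n,
    (forall i, inH0 (a i)) /\
    \sum_(i < n) a i = 0 /\
    (forall x, inH0 x <-> in_span a x) /\
    (forall y, polar_H0 (in_Root a) y <->
               in_mink_seg (fun i => @ehat R n i) (fun i => @ehat R n (ordS i)) y) /\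
    (forall y, in_mink_seg (fun i => @ehat R n i) (fun i => @ehat R n (ordS i)) y <->
               in_mink_seg (fun _ => 0) (fun i => @ehat R n (ordS i) - @ehat R n i) y).
Proof.
have n_gt0 : (0 < n)%N by apply: leq_trans hn.
exists (@avec R n); split; first exact: inH0_avec.
split; first exact: sum_avec.
split; first exact: span_avec.
split=> y; last first.
  by split=> -[t [t01 ->]]; exists t; rewrite mink_seg_ehat ?mink_seg_zero_ehatB.
rewrite polar_Root_avec; split=> [[y0 /(psum_spread_le1 n_gt0 y0) [t t01 ->]]|[t [t01 ->]]].
  by exists t; rewrite mink_seg_ehat.
rewrite mink_seg_ehat //; split; first exact: inH0_cyc_diff.
by apply/(psum_spread_le1 n_gt0 (inH0_cyc_diff t)); exists t.
Qed.
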